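(* Let $\mathbb{X}$ be a topological space with viable base $\Omega_0$, and $\mathbb{D}$ a bc-domain with basis $D_0$. Let $\mathcal{W}$ be the rounded ideal completion of $(\mathbb{B}_{\mathrm{abs}},\prec)$. Then $\mathcal{W}$ is order-isomorphic to $[\widehat{\mathbb{X}}_{\Omega_0}\to\mathbb{D}]$.
   Context: A viable base of $\mathbb{X}=(X,\tau_{\mathbb{X}})$ is a family $\Omega_0\subseteq\tau_{\mathbb{X}}$ closed under finite unions and finite intersections (so $\emptyset,X\in\Omega_0$) which is a base of $\tau_{\mathbb{X}}$. $\mathrm{Idl}(\Omega_0)$ is the complete lattice (under inclusion) of ideals (nonempty, downward closed, directed subsets) of $(\Omega_0,\subseteq)$. $\widehat{\mathbb{X}}_{\Omega_0}$ is the set of completely prime filters of $\mathrm{Idl}(\Omega_0)$ (nonempty upward closed sets closed under binary meets such that $\bigvee A\in F\Rightarrow A\cap F\neq\emptyset$), with the topology whose open sets are exactly $\mathcal{O}_I=\{y: I\in y\}$, $I\in\mathrm{Idl}(\Omega_0)$. A bc-domain is a continuous dcpo with least element $\bot$ in which bounded subsets have joins; $\ll$ is way-below; $\twoheaduparrow b=\{d: b\ll d\}$; a basis $D_0$ is a subset such that each $x$ is the directed join of $\{a\in D_0: a\ll x\}$. $[\widehat{\mathbb{X}}_{\Omega_0}\to\mathbb{D}]$ is the set of functions continuous into the Scott topology of $D$, ordered pointwise. $b\chi_O$ has value $b$ on $O$ and $\bot$ elsewhere; a family $\{b_i\chi_{O_i}\}_{i\in I}$ is consistent if for every $J\subseteq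 I$ with $\bigcap_{j\in J}O_j\neq\emptyset$ the $b_j$ ($j\in J$) have an upper bound. $\mathbb{B}_{\mathrm{abs}}$ is the set of functions $X\to D$ of the form $\bigsqcup_{i\in I}b_i\chi_{O_i}$ (pointwise join) with $I$ finite, the family consistent, $O_i\in\Omega_0$, $b_i\in D_0$; on it, $\bigsqcup_{i\in I}b_i\chi_{O_i}\prec h$ iff $O_i\subseteq h^{-1}(\twoheaduparrow b_i)$ for all $i\in I$. The rounded ideal completion of $(\mathbb{B}_{\mathrm{abs}},\prec)$ is the set of nonempty subsets $R\subseteq\mathbb{B}_{\mathrm{abs}}$ that are $\prec$-downward closed ($h\in R$, $h'\prec h\Rightarrow h'\in R$) and $\prec$-directed (for $h_1,h_2\in R$ there is $h\in R$ with $h_1\prec h$, $h_2\prec h$), ordered by inclusion. *)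

From Stdlib Require Import List.
Import ListNotations.

Definition subset {T : Type} (A B : T -> Prop) : Prop := forall x, A x -> B x.

Definition is_topology {X : Type} (opn : (X -> Prop) -> Prop) : Prop :=
  opn (fun _ => True) /\ opn (fun _ => False) /\
  (forall U V, opn U -> opn V -> opn (fun x => U x /\ V x)) /\
  (forall F : (X -> Prop) -> Prop, (forall U, F U -> opn U) ->
     opn (fun x => exists U, F U /\ U x)).

Definition viable_base {X : Type} (opn : (X -> Prop) -> Prop)
    (Om0 : (X -> Prop) -> Prop) : Prop :=
  (forall U, Om0 U -> opn U) /\
  Om0 (fun _ => False) /\ Om0 (fun _ => True) /\
  (forall U V, Om0 U -> Om0 V -> Om0 (fun x => U x \/ V x)) /\
  (forall U V, Om0 U -> Om0 V -> Om0 (fun x => U x /\ V x)) /\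
  (forall U, opn U -> forall x, U x -> exists B, Om0 B /\ B x /\ subset B U).

Definition is_ideal {X : Type} (Om0 : (X -> Prop) -> Prop)
    (I : (X -> Prop) -> Prop) : Prop :=
  (forall U, I U -> Om0 U) /\
  (exists U, I U) /\
  (forall U V, I U -> Om0 V -> subset V U -> I V) /\
  (forall U V, I U -> I V -> exists W, I W /\ subset U W /\ subset V W).

Definition is_join_Idl {X : Type} (Om0 : (X -> Prop) -> Prop)
    (A : ((X -> Prop) -> Prop) -> Prop) (J : (X -> Prop) -> Prop) : Prop :=
  is_ideal Om0 J /\ (forall I, A I -> subset I J) /\
  (forall K, is_ideal Om0 K -> (forall I, A I -> subset I K) -> subset J K).

Definition is_meet_Idl {X : Type} (Om0 : (X -> Prop) -> Prop)
    (I1 I2 M : (X -> Prop) -> Prop) : Prop :=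
  is_ideal Om0 M /\ subset M I1 /\ subset M I2 /\
  (forall K, is_ideal Om0 K -> subset K I1 -> subset K I2 -> subset K M).

Definition cp_filter {X : Type} (Om0 : (X -> Prop) -> Prop)
    (F : ((X -> Prop) -> Prop) -> Prop) : Prop :=
  (forall I, F I -> is_ideal Om0 I) /\
  (exists I, F I) /\
  (forall I J, F I -> is_ideal Om0 J -> subset I J -> F J) /\
  (forall I1 I2 M, F I1 -> F I2 -> is_meet_Idl Om0 I1 I2 M -> F M) /\
  (forall (A : ((X -> Prop) -> Prop) -> Prop) J,
     (forall I, A I -> is_ideal Om0 I) -> is_join_Idl Om0 A J -> F J ->
     exists I, A I /\ F I).

Definition Xhat {X : Type} (Om0 : (X -> Prop) -> Prop) : Type :=
  { F : ((X -> Prop) -> Prop) -> Prop | cp_filter Om0 F }.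

Definition Xhat_open {X : Type} (Om0 : (X -> Prop) -> Prop)
    (V : Xhat Om0 -> Prop) : Prop :=
  exists I, is_ideal Om0 I /\ forall y : Xhat Om0, V y <-> proj1_sig y I.

Section Domain.
Context {D : Type} (le : D -> D -> Prop).

Definition is_sup (S : D -> Prop) (s : D) : Prop :=
  (forall d, S d -> le d s) /\ (forall u, (forall d, S d -> le d u) -> le s u).

Definition directed (S : D -> Prop) : Prop :=
  (exists d, S d) /\
  (forall a b, S a -> S b -> exists c, S c /\ le a c /\ le b c).

Definition bounded (S : D -> Prop) : Prop := exists u, forall d, S d -> le d u.

Definition way_below (a b : D) : Prop :=
  forall S s, directed S -> is_sup S s -> le b s -> exists d, S d /\ le a d.

Definition bc_domain : Prop :=
  (forall x, le x x) /\
  (forall x y, le x y -> le y x -> x = y) /\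
  (forall x y z, le x y -> le y z -> le x z) /\
  (exists bot, forall x, le bot x) /\
  (forall S, directed S -> exists s, is_sup S s) /\
  (forall x, directed (fun a => way_below a x) /\ is_sup (fun a => way_below a x) x) /\
  (forall S, bounded S -> exists s, is_sup S s).

Definition is_basis (D0 : D -> Prop) : Prop :=
  forall x, directed (fun a => D0 a /\ way_below a x) /\
            is_sup (fun a => D0 a /\ way_below a x) x.

Definition scott_open (U : D -> Prop) : Prop :=
  (forall x y, U x -> le x y -> U y) /\
  (forall S s, directed S -> is_sup S s -> U s -> exists d, S d /\ U d).
End Domain.

Definition scott_cont {X D : Type} (Om0 : (X -> Prop) -> Prop)
    (le : D -> D -> Prop) (f : Xhat Om0 -> D) : Prop :=
  forall U, scott_open le U -> Xhat_open Om0 (fun y => U (f y)).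

Definition ContFun {X D : Type} (Om0 : (X -> Prop) -> Prop)
    (le : D -> D -> Prop) : Type :=
  { f : Xhat Om0 -> D | scott_cont Om0 le f }.

(* A finite family {b_i χ_{O_i}} is represented by a list of pairs (O_i, b_i). *)
Definition consistent {X D : Type} (le : D -> D -> Prop)
    (l : list ((X -> Prop) * D)) : Prop :=
  forall J : ((X -> Prop) * D) -> Prop,
    (forall p, J p -> In p l) ->
    (exists x, forall p, J p -> fst p x) ->
    bounded le (fun b => exists p, J p /\ b = snd p).

(* h is the pointwise join of the family l (the empty join being ⊥) *)
Definition represents {X D : Type} (le : D -> D -> Prop)
    (l : list ((X -> Prop) * D)) (h : X -> D) : Prop :=
  forall x, is_sup le (fun b => exists p, In p l /\ fst p x /\ b = snd p) (h x).

Definition B_abs_repr {X D : Type} (Om0 : (X -> Prop) -> Prop)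
    (le : D -> D -> Prop) (D0 : D -> Prop)
    (l : list ((X -> Prop) * D)) (h : X -> D) : Prop :=
  consistent le l /\
  (forall p, In p l -> Om0 (fst p) /\ D0 (snd p)) /\
  represents le l h.

Definition B_abs {X D : Type} (Om0 : (X -> Prop) -> Prop)
    (le : D -> D -> Prop) (D0 : D -> Prop) (h : X -> D) : Prop :=
  exists l, B_abs_repr Om0 le D0 l h.

Definition prec {X D : Type} (Om0 : (X -> Prop) -> Prop)
    (le : D -> D -> Prop) (D0 : D -> Prop) (g h : X -> D) : Prop :=
  exists l, B_abs_repr Om0 le D0 l g /\
    forall p, In p l -> forall x, fst p x -> way_below le (snd p) (h x).

Definition rounded_ideal {X D : Type} (Om0 : (X -> Prop) -> Prop)
    (le : D -> D -> Prop) (D0 : D -> Prop) (R : (X -> D) -> Prop) : Prop :=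
  (forall h, R h -> B_abs Om0 le D0 h) /\
  (exists h, R h) /\
  (forall h h', R h -> B_abs Om0 le D0 h' -> prec Om0 le D0 h' h -> R h') /\
  (forall h1 h2, R h1 -> R h2 ->
     exists h, R h /\ prec Om0 le D0 h1 h /\ prec Om0 le D0 h2 h).

Definition RIC {X D : Type} (Om0 : (X -> Prop) -> Prop)
    (le : D -> D -> Prop) (D0 : D -> Prop) : Type :=
  { R : (X -> D) -> Prop | rounded_ideal Om0 le D0 R }.

(* A point y of Xhat is determined by the prime filter of basic opens O with y |= O (the
   principal ideal of O lies in y); a prime ideal of Om0 conversely yields a point, and the
   prime ideal theorem (Zorn) shows that an ideal of Om0 containing, for every point y |= O,
   some V with y |= V, already contains O.  This turns pointwise statements on Xhat into
   uniform statements on basic opens.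
   The isomorphism sends R to phi R y = sup { d | d <= h on some O with y |= O, h in R } and a
   continuous f to the set of g in B_abs whose steps b chi_O satisfy b << f y whenever y |= O.
   Finitely many steps are compared with y through a generic point x0 of X that lies in exactly
   the basic opens of the family that y satisfies, and the continuity of f provides, by
   interpolation in the basis, the finite step functions approximating f. *)
From mathcomp Require classical_sets.
From Stdlib Require Import List Classical ClassicalEpsilon.
From Stdlib Require Import FunctionalExtensionality PropExtensionality ProofIrrelevance.
Import ListNotations.

Lemma predext {T : Type} (A B : T -> Prop) : (forall x, A x <-> B x) -> A = B.
Proof.
  intros H; apply functional_extensionality; intros x.
  apply propositional_extensionality, H.
Qed.

Section Isomorphism.
Variables (X : Type) (Om0 : (X -> Prop) -> Prop).
Hypothesis Om0_False : Om0 (fun _ => False).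
Hypothesis Om0_True : Om0 (fun _ => True).
Hypothesis Om0_or : forall U V, Om0 U -> Om0 V -> Om0 (fun x => U x \/ V x).
Hypothesis Om0_and : forall U V, Om0 U -> Om0 V -> Om0 (fun x => U x /\ V x).

Definition down (O : X -> Prop) : (X -> Prop) -> Prop := fun V => Om0 V /\ subset V O.

Lemma down_self O : Om0 O -> down O O.
Proof. intros HO; split; [exact HO | intros x h; exact h]. Qed.

Lemma down_ideal O : Om0 O -> is_ideal Om0 (down O).
Proof.
  intros HO; split; [|split; [|split]].
  - intros U [HU _]; exact HU.
  - exists O; apply down_self, HO.
  - intros U V [_ HUO] HV HVU; split; [exact HV | intros x h; apply HUO, HVU, h].
  - intros U V [_ HU] [_ HV]; exists O; split; [apply down_self, HO | split; assumption].
Qed.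

Lemma down_sub_ideal I O : is_ideal Om0 I -> I O -> subset (down O) I.
Proof. intros [_ [_ [Hdown _]]] HO V [HV HVO]; exact (Hdown O V HO HV HVO). Qed.

Lemma ideal_or I U V : is_ideal Om0 I -> I U -> I V -> I (fun x => U x \/ V x).
Proof.
  intros [HI [_ [Hdown Hdir]]] HU HV.
  destruct (Hdir U V HU HV) as [W [HW [HUW HVW]]].
  apply (Hdown W); [exact HW | apply Om0_or; apply HI; assumption |].
  intros x [h|h]; auto.
Qed.

Definition models (y : Xhat Om0) (O : X -> Prop) : Prop := proj1_sig y (down O).

Lemma models_up y O O' : models y O -> Om0 O' -> subset O O' -> models y O'.
Proof.
  intros HyO HO' HOO'. destruct (proj2_sig y) as [_ [_ [Hup _]]].
  apply (Hup (down O)); [exact HyO | apply down_ideal, HO' |].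
  intros V [HV HVO]; split; [exact HV | intros x h; apply HOO', HVO, h].
Qed.

Lemma point_of_models y I V : is_ideal Om0 I -> I V -> models y V -> proj1_sig y I.
Proof.
  intros HI HV HyV. destruct (proj2_sig y) as [_ [_ [Hup _]]].
  exact (Hup _ _ HyV HI (down_sub_ideal I V HI HV)).
Qed.

Lemma models_True y : models y (fun _ => True).
Proof.
  destruct (proj2_sig y) as [Hid [[I HI] [Hup _]]].
  apply (Hup I); [exact HI | apply down_ideal, Om0_True |].
  intros V HV; split; [exact (proj1 (Hid I HI) V HV) | intros x _; trivial].
Qed.

Lemma models_False y : ~ models y (fun _ => False).
Proof.
  intros HyF. destruct (proj2_sig y) as [_ [_ [_ [_ Hprime]]]].
  destruct (Hprime (fun _ => False) (down (fun _ => False))) as [I [[] _]]; [intros I [] | | exact HyF].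
  split; [apply down_ideal, Om0_False | split; [intros I [] |]].
  intros K [_ [[U HU] [Hdown _]]] _ V [HV HVF].
  apply (Hdown U V HU HV); intros x h; destruct (HVF x h).
Qed.

Lemma models_nonempty y O : models y O -> exists x, O x.
Proof.
  intros HyO. apply NNPP; intros Hempty. apply (models_False y).
  apply (models_up y O _ HyO Om0_False); intros x h; apply Hempty; exists x; exact h.
Qed.

Lemma models_and y O1 O2 : Om0 O1 -> Om0 O2 -> models y O1 -> models y O2 ->
  models y (fun x => O1 x /\ O2 x).
Proof.
  intros H1 H2 Hy1 Hy2. destruct (proj2_sig y) as [_ [_ [_ [Hmeet _]]]].
  apply (Hmeet (down O1) (down O2)); [exact Hy1 | exact Hy2 |].
  split; [apply down_ideal, Om0_and; assumption | split; [| split]].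
  - intros V [HV HVO]; split; [exact HV | intros x h; apply (HVO x h)].
  - intros V [HV HVO]; split; [exact HV | intros x h; apply (HVO x h)].
  - intros K _ HK1 HK2 V HV. destruct (HK1 V HV) as [HVo HV1]. destruct (HK2 V HV) as [_ HV2].
    split; [exact HVo | intros x h; split; [apply HV1, h | apply HV2, h]].
Qed.

Lemma models_or y O1 O2 : Om0 O1 -> Om0 O2 -> models y (fun x => O1 x \/ O2 x) ->
  models y O1 \/ models y O2.
Proof.
  intros H1 H2 Hy. destruct (proj2_sig y) as [_ [_ [_ [_ Hprime]]]].
  destruct (Hprime (fun I => I = down O1 \/ I = down O2) (down (fun x => O1 x \/ O2 x)))
    as [I [[E|E] HI]]; subst; auto.
  - intros I [E|E]; subst; apply down_ideal; assumption.
  - split; [apply down_ideal, Om0_or; assumption | split].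
    + intros I [E|E]; subst; intros V [HV HVO]; split; try exact HV; intros x h; auto.
    + intros K HK HsK. apply (down_sub_ideal K _ HK), ideal_or; [exact HK | |].
      * apply (HsK (down O1)); [left; reflexivity | apply down_self, H1].
      * apply (HsK (down O2)); [right; reflexivity | apply down_self, H2].
Qed.

(* Every ideal is the directed join of the principal ideals of its members. *)
Lemma point_witness y I : proj1_sig y I -> exists V, I V /\ models y V.
Proof.
  intros HyI. destruct (proj2_sig y) as [Hid [_ [_ [_ Hprime]]]].
  pose proof (Hid I HyI) as HI. destruct HI as [HIo [_ [Hdown _]]].
  destruct (Hprime (fun J => exists V, I V /\ J = down V) I) as [J [[V [HV E]] HyJ]].
  - intros J [V [HV E]]; subst; apply down_ideal, HIo, HV.
  - split; [exact (Hid I HyI) | split].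
    + intros J [V [HV E]]; subst; intros W [HW HWV]; exact (Hdown V W HV HW HWV).
    + intros K _ HsK V HV. apply (HsK (down V)); [exists V; auto | apply down_self, HIo, HV].
  - exact HyI.
  - subst; exists V; auto.
Qed.

Definition Xhat_nbhd (Q : Xhat Om0 -> Prop) (y : Xhat Om0) : Prop :=
  exists V, Om0 V /\ models y V /\ forall y', models y' V -> Q y'.

Lemma Xhat_open_nbhd Q y : Xhat_open Om0 Q -> Q y -> Xhat_nbhd Q y.
Proof.
  intros [I [HI HQ]] Hy. destruct (point_witness y I (proj1 (HQ y) Hy)) as [V [HV HyV]].
  exists V; split; [apply (proj1 HI), HV | split; [exact HyV |]].
  intros y' Hy'V; apply (proj2 (HQ y')), (point_of_models y' I V HI HV Hy'V).
Qed.

Definition sat_ideal (Q : Xhat Om0 -> Prop) : (X -> Prop) -> Prop :=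
  fun V => Om0 V /\ forall y, models y V -> Q y.

Lemma sat_ideal_ideal Q : is_ideal Om0 (sat_ideal Q).
Proof.
  split; [| split; [| split]].
  - intros V [HV _]; exact HV.
  - exists (fun _ => False); split; [exact Om0_False | intros y HyF; destruct (models_False y HyF)].
  - intros V W [HV HVQ] HW HWV; split; [exact HW |].
    intros y HyW; apply HVQ, (models_up y W V HyW HV HWV).
  - intros V W [HV HVQ] [HW HWQ]; exists (fun x => V x \/ W x).
    split; [split; [apply Om0_or; assumption |] | split; intros x h; auto].
    intros y Hy; destruct (models_or y V W HV HW Hy); auto.
Qed.

Lemma Xhat_open_of_nbhd Q : (forall y, Q y -> Xhat_nbhd Q y) -> Xhat_open Om0 Q.
Proof.
  intros Hnbhd. exists (sat_ideal Q); split; [apply sat_ideal_ideal | intros y; split].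
  - intros Hy. destruct (Hnbhd y Hy) as [V [HV [HyV HVQ]]].
    exact (point_of_models y _ V (sat_ideal_ideal Q) (conj HV HVQ) HyV).
  - intros Hy. destruct (point_witness y _ Hy) as [V [[_ HVQ] HyV]]; exact (HVQ y HyV).
Qed.

Definition prime_ideal (P : (X -> Prop) -> Prop) : Prop :=
  is_ideal Om0 P /\ ~ P (fun _ => True) /\
  forall V1 V2, Om0 V1 -> Om0 V2 -> ~ P V1 -> ~ P V2 -> ~ P (fun x => V1 x /\ V2 x).

Definition prime_filter (P : (X -> Prop) -> Prop) : ((X -> Prop) -> Prop) -> Prop :=
  fun I => is_ideal Om0 I /\ exists V, I V /\ ~ P V.

Lemma prime_filter_cp P : prime_ideal P -> cp_filter Om0 (prime_filter P).
Proof.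
  intros [HP [HT Hpr]]. split; [| split; [| split; [| split]]].
  - intros I [HI _]; exact HI.
  - exists (down (fun _ => True)); split; [apply down_ideal, Om0_True |].
    exists (fun _ => True); split; [apply down_self, Om0_True | exact HT].
  - intros I J [_ [V [HV HnV]]] HJ HIJ; split; [exact HJ | exists V; auto].
  - intros I1 I2 M [HI1 [V1 [HV1 Hn1]]] [HI2 [V2 [HV2 Hn2]]] [HM [_ [_ Hmax]]].
    assert (L1 : Om0 V1) by exact (proj1 HI1 V1 HV1).
    assert (L2 : Om0 V2) by exact (proj1 HI2 V2 HV2).
    split; [exact HM | exists (fun x => V1 x /\ V2 x); split; [| apply Hpr; assumption]].
    apply (Hmax (down (fun x => V1 x /\ V2 x))); [apply down_ideal, Om0_and; assumption | | |
      apply down_self, Om0_and; assumption]; intros W [HW HWV].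
    + apply (down_sub_ideal I1 V1 HI1 HV1); split; [exact HW | intros x h; apply (HWV x h)].
    + apply (down_sub_ideal I2 V2 HI2 HV2); split; [exact HW | intros x h; apply (HWV x h)].
  - intros A J HA [HJ [_ Hlub]] [_ [V [HV HnV]]]. apply NNPP; intros Hno. apply HnV.
    apply (Hlub P HP); [| exact HV].
    intros I HAI W HW. apply NNPP; intros HnW. apply Hno.
    exists I; split; [exact HAI | split; [apply HA, HAI | exists W; auto]].
Qed.

Definition prime_point P (HP : prime_ideal P) : Xhat Om0 :=
  exist _ (prime_filter P) (prime_filter_cp P HP).

Lemma models_prime_point P HP O : Om0 O -> (models (prime_point P HP) O <-> ~ P O).
Proof.
  intros HO; unfold models; simpl; split.
  - intros [_ [V [[HV HVO] HnV]]] HPO.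
    apply HnV, (proj1 (proj2 (proj2 (proj1 HP))) O V HPO HV HVO).
  - intros HnO; split; [apply down_ideal, HO | exists O; split; [apply down_self, HO | exact HnO]].
Qed.

Definition outside (x : X) : (X -> Prop) -> Prop := fun W => Om0 W /\ ~ W x.

Lemma outside_prime x : prime_ideal (outside x).
Proof.
  split; [split; [| split; [| split]] | split].
  - intros U [HU _]; exact HU.
  - exists (fun _ => False); split; [exact Om0_False | intros []].
  - intros U V [_ HU] HV HVU; split; [exact HV | intros h; apply HU, HVU, h].
  - intros U V [HU hU] [HV hV]; exists (fun z => U z \/ V z).
    split; [split; [apply Om0_or; assumption | intros [h|h]; auto] | split; intros z h; auto].
  - intros [_ h]; apply h; trivial.
  - intros V1 V2 L1 L2 h1 h2 [_ h]. apply h; split; apply NNPP; intros n;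
      [apply h1 | apply h2]; split; assumption.
Qed.

Definition point_at (x : X) : Xhat Om0 := prime_point (outside x) (outside_prime x).

Lemma models_point_at x O : Om0 O -> (models (point_at x) O <-> O x).
Proof.
  intros HO; unfold point_at; rewrite models_prime_point by exact HO; unfold outside.
  split; [intros h; apply NNPP; intros n; apply h; split; assumption | intros h [_ n]; exact (n h)].
Qed.

Lemma chain_union_ideal (F : ((X -> Prop) -> Prop) -> Prop) :
  (forall I U, F I -> I U -> is_ideal Om0 I) ->
  (forall I J, F I -> F J -> subset I J \/ subset J I) ->
  (exists I U, F I /\ I U) ->
  is_ideal Om0 (fun U => exists2 I, F I & I U).
Proof.
  intros HF Hchain [I0 [U0 [HI0 HU0]]]. split; [| split; [| split]].
  - intros U [I HI HU]; exact (proj1 (HF I U HI HU) U HU).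
  - exists U0, I0; assumption.
  - intros U V [I HI HU] HV HVU; exists I; [exact HI |].
    exact (proj1 (proj2 (proj2 (HF I U HI HU))) U V HU HV HVU).
  - intros U V [I HI HU] [J HJ HV].
    destruct (Hchain I J HI HJ) as [HIJ | HJI].
    + destruct (proj2 (proj2 (proj2 (HF J V HJ HV))) U V (HIJ U HU) HV) as [W [HW HUVW]].
      exists W; split; [exists J; assumption | exact HUVW].
    + destruct (proj2 (proj2 (proj2 (HF I U HI HU))) U V HU (HJI V HV)) as [W [HW HUVW]].
      exists W; split; [exists I; assumption | exact HUVW].
Qed.

Lemma maximal_ideal_avoiding K O : is_ideal Om0 K -> ~ K O ->
  exists A, is_ideal Om0 A /\ subset K A /\ ~ A O /\
    forall B, is_ideal Om0 B -> subset A B -> ~ B O -> subset B A.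
Proof.
  intros HK HnKO.
  (* The empty family is admitted so that the union of the empty chain is admissible. *)
  destruct (@classical_sets.Zorn_bigcup _
     (fun A => (forall V, ~ A V) \/ (is_ideal Om0 A /\ subset K A /\ ~ A O))) as [A [HA Hmax]].
  - intros F HF Hchain. destruct (classic (exists I U, F I /\ I U)) as [HFne | HFe]; [right | left].
    + assert (HFid : forall I U, F I -> I U -> is_ideal Om0 I /\ subset K I /\ ~ I O).
      { intros I U HI HU; destruct (HF I HI) as [E|E]; [destruct (E U HU) | exact E]. }
      split; [| split].
      * apply chain_union_ideal; [intros I U HI HU; apply (HFid I U HI HU) | exact Hchain | exact HFne].
      * intros U HU. destruct HFne as [I [U' [HI HU']]].
        exists I; [exact HI | apply (HFid I U' HI HU'), HU].
      * intros [I HI HO]. exact (proj2 (proj2 (HFid I O HI HO)) HO).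
    + intros V [I HI HV]. apply HFe; exists I, V; auto.
  - assert (HAid : is_ideal Om0 A /\ subset K A /\ ~ A O).
    { destruct HA as [Hempty | E]; [exfalso | exact E].
      destruct HK as [HKo [[U HU] HKrest]].
      apply (Hmax K).
      - split; [intros V h; destruct (Hempty V h) | intros HKA; apply (Hempty U), HKA, HU].
      - right; split; [exact (conj HKo (conj (ex_intro _ U HU) HKrest)) |].
        split; [intros V h; exact h | exact HnKO]. }
    destruct HAid as [HAi [HKA HnAO]].
    exists A; split; [exact HAi | split; [exact HKA | split; [exact HnAO |]]].
    intros B HB HAB HnBO V HV. apply NNPP; intros HnV.
    apply (Hmax B); [split; [exact HAB | intros HBA; apply HnV, HBA, HV] |].
    right; split; [exact HB | split; [intros U hU; apply HAB, HKA, hU | exact HnBO]].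
Qed.

Section MaximalAvoiding.
Variables (A : (X -> Prop) -> Prop) (O : X -> Prop).
Hypothesis A_ideal : is_ideal Om0 A.
Hypothesis A_avoids : ~ A O.
Hypothesis A_max : forall B, is_ideal Om0 B -> subset A B -> ~ B O -> subset B A.

Definition join_with (V : X -> Prop) : (X -> Prop) -> Prop :=
  fun W => Om0 W /\ exists k, A k /\ subset W (fun x => k x \/ V x).

Lemma join_with_ideal V : Om0 V -> is_ideal Om0 (join_with V).
Proof.
  intros HV. split; [| split; [| split]].
  - intros U [hU _]; exact hU.
  - exists V; split; [exact HV |].
    destruct (proj1 (proj2 A_ideal)) as [k hk].
    exists k; split; [exact hk | intros x h; right; exact h].
  - intros U W [_ [k [hk s]]] HW sW; split; [exact HW |].
    exists k; split; [exact hk | intros x h; apply s, sW, h].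
  - intros U W [hU [k1 [hk1 s1]]] [hW [k2 [hk2 s2]]]; exists (fun x => U x \/ W x).
    split; [split; [apply Om0_or; assumption |] | split; intros x h; auto].
    exists (fun x => k1 x \/ k2 x); split; [apply ideal_or; assumption |].
    intros x [h|h]; [destruct (s1 x h) | destruct (s2 x h)]; tauto.
Qed.

Lemma maximal_avoiding_cover V : Om0 V -> ~ A V -> exists k, A k /\ subset O (fun x => k x \/ V x).
Proof.
  intros HV HnV.
  assert (HJO : join_with V O).
  { apply NNPP; intros HnJ. apply HnV, (A_max _ (join_with_ideal V HV)); [| exact HnJ |].
    - intros W HW; split; [apply (proj1 A_ideal), HW |].
      exists W; split; [exact HW | intros x h; left; exact h].
    - split; [exact HV |]. destruct (proj1 (proj2 A_ideal)) as [k hk].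
      exists k; split; [exact hk | intros x h; right; exact h]. }
  destruct HJO as [_ HJO]; exact HJO.
Qed.

Lemma maximal_avoiding_prime : Om0 O -> prime_ideal A.
Proof.
  intros HO. split; [exact A_ideal | split].
  - intros HT. apply A_avoids, (proj1 (proj2 (proj2 A_ideal)) _ O HT HO); intros x _; trivial.
  - intros V1 V2 H1 H2 Hn1 Hn2 H12.
    destruct (maximal_avoiding_cover V1 H1 Hn1) as [k1 [Hk1 HO1]].
    destruct (maximal_avoiding_cover V2 H2 Hn2) as [k2 [Hk2 HO2]].
    apply A_avoids, (proj1 (proj2 (proj2 A_ideal)) (fun x => (k1 x \/ k2 x) \/ (V1 x /\ V2 x)));
      [apply ideal_or; [exact A_ideal | apply ideal_or; assumption | exact H12] | exact HO |].
    intros x hx. destruct (HO1 x hx) as [h|h]; [left; left; exact h |].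
    destruct (HO2 x hx) as [h'|h']; [left; right; exact h' | right; split; assumption].
Qed.
End MaximalAvoiding.

(* The prime ideal theorem for the distributive lattice [Om0], phrased through the points
   of [Xhat Om0]. *)
Lemma ideal_mem_of_points K O : is_ideal Om0 K -> Om0 O ->
  (forall y, models y O -> proj1_sig y K) -> K O.
Proof.
  intros HK HO Hpts. apply NNPP; intros HnKO.
  destruct (maximal_ideal_avoiding K O HK HnKO) as [A [HA [HKA [HnAO HAmax]]]].
  pose proof (maximal_avoiding_prime A O HA HnAO HAmax HO) as HP.
  destruct (Hpts (prime_point A HP)) as [_ [V [HV HnV]]].
  - apply models_prime_point; assumption.
  - apply HnV, HKA, HV.
Qed.

Definition basic_family {B : Type} (l : list ((X -> Prop) * B)) : Prop :=
  forall p, In p l -> Om0 (fst p).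

Lemma basic_family_cons {B : Type} (a : (X -> Prop) * B) l :
  basic_family (a :: l) -> Om0 (fst a) /\ basic_family l.
Proof. intros Hl; split; [apply Hl; left; reflexivity | intros p hp; apply Hl; right; exact hp]. Qed.

Lemma Om0_ext U V : Om0 U -> (forall x, U x <-> V x) -> Om0 V.
Proof. intros HU HUV; rewrite <- (predext U V HUV); exact HU. Qed.

Lemma models_ext y U V : models y U -> (forall x, U x <-> V x) -> models y V.
Proof. intros HU HUV; rewrite <- (predext U V HUV); exact HU. Qed.

Lemma Om0_guard (P : Prop) U : Om0 U -> Om0 (fun x => P /\ U x).
Proof.
  intros HU; destruct (classic P) as [p | np];
    [apply (Om0_ext U) | apply (Om0_ext (fun _ => False))]; tauto.
Qed.

Lemma Om0_impl (P : Prop) U : Om0 U -> Om0 (fun x => P -> U x).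
Proof.
  intros HU; destruct (classic P) as [p | np];
    [apply (Om0_ext U) | apply (Om0_ext (fun _ => True))]; tauto.
Qed.

Lemma Om0_list_union {B : Type} (l : list ((X -> Prop) * B)) (Q : (X -> Prop) * B -> Prop) :
  basic_family l -> Om0 (fun x => exists p, In p l /\ Q p /\ fst p x).
Proof.
  induction l as [| a l' IH]; simpl; intros Hl.
  - apply (Om0_ext _ _ Om0_False); firstorder.
  - destruct (basic_family_cons a l' Hl) as [Ha Hl'].
    apply (Om0_ext (fun x => (Q a /\ fst a x) \/ exists p, In p l' /\ Q p /\ fst p x)).
    + apply Om0_or; [apply Om0_guard, Ha | apply IH, Hl'].
    + firstorder (subst; auto).
Qed.

Lemma models_list_union {B : Type} (l : list ((X -> Prop) * B)) (Q : (X -> Prop) * B -> Prop) y :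
  basic_family l -> models y (fun x => exists p, In p l /\ Q p /\ fst p x) ->
  exists p, In p l /\ Q p /\ models y (fst p).
Proof.
  induction l as [| a l' IH]; simpl; intros Hl Hy.
  - destruct (models_nonempty y _ Hy) as [x [p [[] _]]].
  - destruct (basic_family_cons a l' Hl) as [Ha Hl'].
    assert (Hguard : Om0 (fun x => Q a /\ fst a x)) by (apply Om0_guard, Ha).
    destruct (models_or y _ _ Hguard (Om0_list_union l' Q Hl'))
      as [Hya | Hyl']; [apply (models_ext y _ _ Hy); firstorder (subst; auto) | |].
    + destruct (models_nonempty y _ Hya) as [x [HQa _]].
      exists a; split; [left; reflexivity | split; [exact HQa |]].
      apply (models_up y _ _ Hya Ha); intros z [_ h]; exact h.
    + destruct (IH Hl' Hyl') as [p [hp hpy]]; exists p; auto.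
Qed.

Lemma Om0_list_inter {B : Type} (l : list ((X -> Prop) * B)) (Q : (X -> Prop) * B -> Prop) :
  basic_family l -> Om0 (fun x => forall p, In p l -> Q p -> fst p x).
Proof.
  induction l as [| a l' IH]; simpl; intros Hl.
  - apply (Om0_ext _ _ Om0_True); firstorder.
  - destruct (basic_family_cons a l' Hl) as [Ha Hl'].
    apply (Om0_ext (fun x => (Q a -> fst a x) /\ forall p, In p l' -> Q p -> fst p x)).
    + apply Om0_and; [apply Om0_impl, Ha | apply IH, Hl'].
    + firstorder (subst; auto).
Qed.

Lemma models_list_inter {B : Type} (l : list ((X -> Prop) * B)) (Q : (X -> Prop) * B -> Prop) y :
  basic_family l -> (forall p, In p l -> Q p -> models y (fst p)) ->
  models y (fun x => forall p, In p l -> Q p -> fst p x).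
Proof.
  induction l as [| a l' IH]; simpl; intros Hl Hy.
  - apply (models_ext y _ _ (models_True y)); firstorder.
  - destruct (basic_family_cons a l' Hl) as [Ha Hl'].
    apply (models_ext y (fun x => (Q a -> fst a x) /\ forall p, In p l' -> Q p -> fst p x));
      [| firstorder (subst; auto)].
    apply models_and; [apply Om0_impl, Ha | apply Om0_list_inter, Hl' | |].
    + destruct (classic (Q a)) as [HQa | HnQa].
      * apply (models_up y (fst a)); [apply Hy; auto | apply Om0_impl, Ha | intros x h _; exact h].
      * apply (models_up y (fun _ => True)); [apply models_True | apply Om0_impl, Ha |].
        intros x _ HQa; contradiction.
    + apply IH; [exact Hl' | intros p hp; apply Hy; right; exact hp].
Qed.

(* [x0] is an actual point of [X] that, as far as the finitely many opens of [l] can tell,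
   looks like [y]. *)
Lemma generic_point {B : Type} y O (l : list ((X -> Prop) * B)) :
  basic_family l -> Om0 O -> models y O ->
  exists x0 O', Om0 O' /\ models y O' /\ subset O' O /\ O' x0 /\
    (forall p, In p l -> models y (fst p) -> subset O' (fst p)) /\
    (forall p, In p l -> fst p x0 -> models y (fst p)).
Proof.
  intros Hl HO HyO.
  set (Q := fun p : (X -> Prop) * B => models y (fst p)).
  set (O' := fun x => O x /\ forall p, In p l -> Q p -> fst p x).
  assert (HO' : Om0 O') by (apply Om0_and; [exact HO | apply Om0_list_inter, Hl]).
  assert (HyO' : models y O') by (apply models_and; auto using Om0_list_inter, models_list_inter).
  assert (Hx0 : exists x0, O' x0 /\ forall p, In p l -> fst p x0 -> Q p).
  { apply NNPP; intros Hno.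
    assert (Hcov : models y (fun x => exists p, In p l /\ ~ Q p /\ fst p x)).
    { apply (models_up y O' _ HyO' (Om0_list_union l _ Hl)); intros x hx.
      apply NNPP; intros Hnx; apply Hno; exists x; split; [exact hx |].
      intros p hp hpx; apply NNPP; intros HnQ; apply Hnx; exists p; auto. }
    destruct (models_list_union l _ y Hl Hcov) as [p [_ [HnQ HQ]]]; exact (HnQ HQ). }
  destruct Hx0 as [x0 [Hx0 Hgen]].
  exists x0, O'; split; [exact HO' | split; [exact HyO' | split; [intros x [h _]; exact h |]]].
  split; [exact Hx0 | split; [| exact Hgen]].
  intros p hp hQ x [_ h]; apply h; assumption.
Qed.

Variables (D : Type) (le : D -> D -> Prop) (D0 : D -> Prop) (bot : D).
Hypothesis le_refl : forall x, le x x.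
Hypothesis le_antisym : forall x y, le x y -> le y x -> x = y.
Hypothesis le_trans : forall x y z, le x y -> le y z -> le x z.
Hypothesis le_bot : forall x, le bot x.
Hypothesis directed_sup : forall S, directed le S -> exists s, is_sup le S s.
Hypothesis bounded_sup : forall S, bounded le S -> exists s, is_sup le S s.
Hypothesis D0_basis : is_basis le D0.

Local Notation "a << b" := (way_below le a b) (at level 70).

Lemma way_below_le a b : a << b -> le a b.
Proof.
  intros Hab. destruct (Hab (fun d => d = b) b) as [d [E Had]]; [| | apply le_refl | subst; exact Had].
  - split; [exists b; reflexivity |].
    intros a1 b1 E1 E2; subst; exists b; split; [reflexivity | split; apply le_refl].
  - split; [intros d E; subst; apply le_refl | intros u Hu; apply Hu; reflexivity].
Qed.

Lemma way_below_mono a' a b b' : le a' a -> a << b -> le b b' -> a' << b'.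
Proof.
  intros Ha Hab Hb S s HS Hs Hb's. destruct (Hab S s HS Hs (le_trans _ _ _ Hb Hb's)) as [d [Sd Had]].
  exists d; split; [exact Sd | exact (le_trans _ _ _ Ha Had)].
Qed.

Definition interpolants (b : D) : D -> Prop :=
  fun d => D0 d /\ exists c, D0 c /\ d << c /\ c << b.

Lemma interpolants_directed b : directed le (interpolants b).
Proof.
  destruct (D0_basis b) as [[[c0 [Dc0 Wc0]] Hdir] _]. split.
  - destruct (D0_basis c0) as [[[d0 [Dd0 Wd0]] _] _]. exists d0; split; [exact Dd0 | exists c0; auto].
  - intros d1 d2 [_ [c1 [Dc1 [W1 W1']]]] [_ [c2 [Dc2 [W2 W2']]]].
    destruct (Hdir c1 c2 (conj Dc1 W1') (conj Dc2 W2')) as [c [[Dc Wc] [Hc1 Hc2]]].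
    destruct (W1 _ _ (proj1 (D0_basis c1)) (proj2 (D0_basis c1)) (le_refl c1)) as [e1 [[De1 We1] Hde1]].
    destruct (W2 _ _ (proj1 (D0_basis c2)) (proj2 (D0_basis c2)) (le_refl c2)) as [e2 [[De2 We2] Hde2]].
    destruct (proj2 (proj1 (D0_basis c)) e1 e2) as [e [[De We] [He1 He2]]].
    + split; [exact De1 | apply (way_below_mono e1 e1 c1 c); auto].
    + split; [exact De2 | apply (way_below_mono e2 e2 c2 c); auto].
    + exists e; split; [split; [exact De | exists c; auto] | split; eapply le_trans; eauto].
Qed.

Lemma interpolants_sup b : is_sup le (interpolants b) b.
Proof.
  split.
  - intros d [_ [c [_ [W1 W2]]]]; apply (le_trans _ c); apply way_below_le; assumption.
  - intros u Hu. apply (proj2 (proj2 (D0_basis b))); intros c [Dc Wc].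
    apply (proj2 (proj2 (D0_basis c))); intros e [De We].
    apply Hu; split; [exact De | exists c; auto].
Qed.

Lemma way_below_interpolate a b : a << b -> exists c, D0 c /\ a << c /\ c << b.
Proof.
  intros Hab.
  destruct (Hab _ b (interpolants_directed b) (interpolants_sup b) (le_refl b))
    as [d [[_ [c [Dc [W1 W2]]]] Had]].
  exists c; split; [exact Dc | split; [apply (way_below_mono a d c c); auto | exact W2]].
Qed.

Lemma way_below_directed_sup S s a : directed le S -> is_sup le S s -> a << s ->
  exists d, S d /\ a << d.
Proof.
  intros HS Hs Has. destruct (way_below_interpolate a s Has) as [c [_ [W1 W2]]].
  destruct (W2 S s HS Hs (le_refl s)) as [d [Sd Hcd]].
  exists d; split; [exact Sd | apply (way_below_mono a a c d); auto].
Qed.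

Lemma way_below_scott_open c : scott_open le (fun d => c << d).
Proof.
  split.
  - intros x y Hcx Hxy; apply (way_below_mono c c x y); auto.
  - intros S s HS Hs Hcs; apply (way_below_directed_sup S s c); assumption.
Qed.

Definition sup_of (S : D -> Prop) : D := epsilon (inhabits bot) (is_sup le S).

Lemma sup_of_spec S : (exists s, is_sup le S s) -> is_sup le S (sup_of S).
Proof. intros H; unfold sup_of; apply epsilon_spec, H. Qed.

Local Notation repr := (B_abs_repr Om0 le D0).

Lemma repr_basic l g : repr l g -> basic_family l.
Proof. intros [_ [Hl _]] p hp; exact (proj1 (Hl p hp)). Qed.

Lemma repr_le l g x e : repr l g -> (forall p, In p l -> fst p x -> le (snd p) e) -> le (g x) e.
Proof.
  intros [_ [_ Hg]] He. apply (proj2 (Hg x)); intros d [p [hp [hpx E]]]; subst; auto.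
Qed.

Lemma repr_ge l g x p : repr l g -> In p l -> fst p x -> le (snd p) (g x).
Proof. intros [_ [_ Hg]] hp hpx; apply (proj1 (Hg x)); exists p; auto. Qed.

Lemma prec_le g h : prec Om0 le D0 g h -> forall x, le (g x) (h x).
Proof.
  intros [l [Hg Hgh]] x. apply (repr_le l); [exact Hg |].
  intros p hp hpx; apply way_below_le, Hgh; assumption.
Qed.

Definition step_fun (m : list ((X -> Prop) * D)) (x : X) : D :=
  sup_of (fun b => exists p, In p m /\ fst p x /\ b = snd p).

Lemma step_fun_repr m : consistent le m -> (forall p, In p m -> Om0 (fst p) /\ D0 (snd p)) ->
  repr m (step_fun m).
Proof.
  intros Hc Hm. split; [exact Hc | split; [exact Hm |]]. intros x. apply sup_of_spec, bounded_sup.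
  destruct (Hc (fun p => In p m /\ fst p x)) as [u Hu];
    [intros p [h _]; exact h | exists x; intros p [_ h]; exact h |].
  exists u; intros d [p [hp [hpx E]]]; apply Hu; exists p; auto.
Qed.

Lemma rounded_ideal_ub R h1 h2 : rounded_ideal Om0 le D0 R -> R h1 -> R h2 ->
  exists h, R h /\ (forall x, le (h1 x) (h x)) /\ (forall x, le (h2 x) (h x)).
Proof.
  intros [_ [_ [_ Hdir]]] Rh1 Rh2. destruct (Hdir h1 h2 Rh1 Rh2) as [h [Rh [P1 P2]]].
  exists h; split; [exact Rh | split; apply prec_le; assumption].
Qed.

Definition approximants (R : (X -> D) -> Prop) (y : Xhat Om0) : D -> Prop :=
  fun d => exists h, R h /\ exists O, Om0 O /\ models y O /\ forall x, O x -> le d (h x).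

Lemma approximants_directed R y : rounded_ideal Om0 le D0 R -> directed le (approximants R y).
Proof.
  intros HR. split.
  - destruct (proj1 (proj2 HR)) as [h Rh]. exists bot, h; split; [exact Rh |].
    exists (fun _ => True).
    split; [exact Om0_True | split; [apply models_True | intros x _; apply le_bot]].
  - intros d1 d2 [h1 [Rh1 [O1 [HO1 [Hy1 Hd1]]]]] [h2 [Rh2 [O2 [HO2 [Hy2 Hd2]]]]].
    destruct (rounded_ideal_ub R h1 h2 HR Rh1 Rh2) as [h [Rh [Hh1 Hh2]]].
    pose proof (models_and y O1 O2 HO1 HO2 Hy1 Hy2) as Hy12.
    assert (Hd12 : forall x, O1 x /\ O2 x -> forall d, d = d1 \/ d = d2 -> le d (h x)).
    { intros x [h1x h2x] d [E|E]; subst;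
        [apply (le_trans _ (h1 x)); auto | apply (le_trans _ (h2 x)); auto]. }
    destruct (models_nonempty y _ Hy12) as [x0 Hx0].
    destruct (bounded_sup (fun d => d = d1 \/ d = d2)) as [j [Hjub Hjlub]]; [exists (h x0); auto |].
    exists j; split; [| split; apply Hjub; auto].
    exists h; split; [exact Rh | exists (fun x => O1 x /\ O2 x)].
    split; [apply Om0_and; assumption | split; [exact Hy12 | intros x hx; apply Hjlub, Hd12, hx]].
Qed.

Definition phi_fun (R : (X -> D) -> Prop) (y : Xhat Om0) : D := sup_of (approximants R y).

Lemma phi_fun_sup R y : rounded_ideal Om0 le D0 R -> is_sup le (approximants R y) (phi_fun R y).
Proof. intros HR; apply sup_of_spec, directed_sup, approximants_directed, HR. Qed.

Lemma phi_fun_cont R : rounded_ideal Om0 le D0 R -> scott_cont Om0 le (phi_fun R).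
Proof.
  intros HR U [Uup Uin]. apply Xhat_open_of_nbhd; intros y Hy.
  destruct (Uin _ _ (approximants_directed R y HR) (phi_fun_sup R y HR) Hy)
    as [d [[h [Rh [O [HO [HyO HdO]]]]] Ud]].
  exists O; split; [exact HO | split; [exact HyO |]].
  intros y' Hy'O. apply (Uup d); [exact Ud |].
  apply (proj1 (phi_fun_sup R y' HR)); exists h; split; [exact Rh | exists O; auto].
Qed.

Definition prec_hat (g : X -> D) (F : Xhat Om0 -> D) : Prop :=
  exists l, repr l g /\ forall p, In p l -> forall y, models y (fst p) -> snd p << F y.

Lemma prec_hat_phi R g : rounded_ideal Om0 le D0 R -> R g -> prec_hat g (phi_fun R).
Proof.
  intros HR Rg. destruct (proj2 (proj2 (proj2 HR)) g g Rg Rg) as [h [Rh [[l [Hg Hgh]] _]]].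
  exists l; split; [exact Hg |]. intros p hp y Hyp.
  destruct (proj1 HR h Rh) as [lh Hh].
  destruct (generic_point y (fst p) lh (repr_basic lh h Hh) (repr_basic l g Hg p hp) Hyp)
    as [x0 [O' [HO' [HyO' [HO'p [Hx0 [Hsub Hgen]]]]]]].
  assert (Hhx0 : forall x, O' x -> le (h x0) (h x)).
  { intros x hx. apply (repr_le lh); [exact Hh |]. intros q hq hqx.
    apply (repr_ge lh h x q Hh hq), (Hsub q hq (Hgen q hq hqx)), hx. }
  apply (way_below_mono (snd p) (snd p) (h x0) (phi_fun R y)); [apply le_refl | apply Hgh; auto |].
  apply (proj1 (phi_fun_sup R y HR)); exists h; split; [exact Rh | exists O'; auto].
Qed.

Lemma rounded_ideal_above R O b : rounded_ideal Om0 le D0 R -> Om0 O ->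
  (forall y, models y O -> b << phi_fun R y) -> exists h, R h /\ forall x, O x -> b << h x.
Proof.
  intros HR HO Hb.
  set (K := fun V => Om0 V /\ exists h, R h /\ forall x, V x -> b << h x).
  assert (HK : is_ideal Om0 K).
  { split; [| split; [| split]].
    - intros V [HV _]; exact HV.
    - destruct (proj1 (proj2 HR)) as [h Rh].
      exists (fun _ => False); split; [exact Om0_False | exists h; split; [exact Rh | intros x []]].
    - intros V W [_ [h [Rh Hh]]] HW HWV.
      split; [exact HW | exists h; split; [exact Rh | intros x hx; apply Hh, HWV, hx]].
    - intros V W [HV [h1 [Rh1 H1]]] [HW [h2 [Rh2 H2]]].
      destruct (rounded_ideal_ub R h1 h2 HR Rh1 Rh2) as [h [Rh [Hh1 Hh2]]].
      exists (fun x => V x \/ W x).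
      split; [split; [apply Om0_or; assumption |] | split; intros x hx; auto].
      exists h; split; [exact Rh |]. intros x [hx|hx];
        [apply (way_below_mono b b (h1 x)) | apply (way_below_mono b b (h2 x))]; auto. }
  destruct (ideal_mem_of_points K O HK HO) as [_ Hh]; [| exact Hh].
  intros y HyO.
  destruct (way_below_directed_sup _ _ b (approximants_directed R y HR) (phi_fun_sup R y HR) (Hb y HyO))
    as [d [[h [Rh [V [HV [HyV HdV]]]]] Hbd]].
  apply (point_of_models y K V HK); [| exact HyV].
  split; [exact HV | exists h; split; [exact Rh |]].
  intros x hx; apply (way_below_mono b b d (h x)); auto.
Qed.

Lemma rounded_ideal_above_list R l : rounded_ideal Om0 le D0 R -> basic_family l ->
  (forall p, In p l -> forall y, models y (fst p) -> snd p << phi_fun R y) ->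
  exists h, R h /\ forall p, In p l -> forall x, fst p x -> snd p << h x.
Proof.
  intros HR. induction l as [| a l IH]; intros Hl Hw.
  - destruct (proj1 (proj2 HR)) as [h Rh]; exists h; split; [exact Rh | intros p []].
  - destruct (basic_family_cons a l Hl) as [Ha Hl'].
    destruct (IH Hl') as [h1 [Rh1 H1]]; [intros p hp; apply Hw; right; exact hp |].
    destruct (rounded_ideal_above R (fst a) (snd a) HR Ha) as [h2 [Rh2 H2]];
      [apply Hw; left; reflexivity |].
    destruct (rounded_ideal_ub R h1 h2 HR Rh1 Rh2) as [h [Rh [Hh1 Hh2]]].
    exists h; split; [exact Rh |]. intros p [E | hp] x hx.
    + subst p; apply (way_below_mono (snd a) (snd a) (h2 x) (h x)); auto.
    + apply (way_below_mono (snd p) (snd p) (h1 x) (h x)); auto.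
Qed.

Lemma mem_of_prec_hat R g : rounded_ideal Om0 le D0 R -> prec_hat g (phi_fun R) -> R g.
Proof.
  intros HR [l [Hg Hgl]].
  destruct (rounded_ideal_above_list R l HR (repr_basic l g Hg) Hgl) as [h [Rh Hh]].
  apply (proj1 (proj2 (proj2 HR)) h g Rh); exists l; [exact Hg | split; [exact Hg | exact Hh]].
Qed.

Section FromContinuous.
Variable f : Xhat Om0 -> D.
Hypothesis f_cont : scott_cont Om0 le f.

Lemma way_below_nbhd c y : c << f y -> Xhat_nbhd (fun y' => c << f y') y.
Proof.
  intros Hc; apply Xhat_open_nbhd; [| exact Hc].
  apply (f_cont (fun d => c << d)), way_below_scott_open.
Qed.

Definition psi_set : (X -> D) -> Prop := fun g => prec_hat g f.

Lemma approximant_le_f y d : approximants psi_set y d -> le d (f y).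
Proof.
  intros [g [[l [Hg Hgl]] [O [HO [HyO HdO]]]]].
  destruct (generic_point y O l (repr_basic l g Hg) HO HyO) as [x0 [O' [_ [_ [HO'O [Hx0 [_ Hgen]]]]]]].
  apply (le_trans _ (g x0)); [apply HdO, HO'O, Hx0 |].
  apply (repr_le l); [exact Hg |]. intros p hp hpx; apply way_below_le, Hgl; auto.
Qed.

Lemma f_le_phi_psi y : directed le (approximants psi_set y) -> le (f y) (phi_fun psi_set y).
Proof.
  intros Hd. pose proof (sup_of_spec _ (directed_sup _ Hd)) as [Hub _].
  apply (proj2 (proj2 (D0_basis (f y)))). intros a [Da Wa].
  destruct (way_below_nbhd a y Wa) as [V [HV [HyV HVa]]].
  assert (Hrepr : repr [(V, a)] (step_fun [(V, a)])).
  { apply step_fun_repr; [| intros p [E|[]]; subst; auto].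
    intros J HJ _; exists a; intros b [p [Jp E]]; destruct (HJ p Jp) as [E'|[]]; subst; apply le_refl. }
  apply Hub. exists (step_fun [(V, a)]); split.
  - exists [(V, a)]; split; [exact Hrepr | intros p [E|[]]; subst; exact HVa].
  - exists V; split; [exact HV | split; [exact HyV |]].
    intros x hx; apply (repr_ge [(V, a)] _ x (V, a) Hrepr); [left; reflexivity | exact hx].
Qed.

Definition good_family (m : list ((X -> Prop) * D)) : Prop :=
  forall q, In q m -> Om0 (fst q) /\ D0 (snd q) /\ forall y, models y (fst q) -> snd q << f y.

Lemma good_family_app m1 m2 : good_family m1 -> good_family m2 -> good_family (m1 ++ m2).
Proof. intros H1 H2 q hq; destruct (in_app_or _ _ _ hq); auto. Qed.

Lemma good_family_repr m : good_family m -> repr m (step_fun m).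
Proof.
  intros Hm. apply step_fun_repr; [| intros p hp; destruct (Hm p hp) as [Hp [Hp' _]]; auto].
  intros J HJ [x Hx]. exists (f (point_at x)); intros b [p [Jp E]]; subst b.
  destruct (Hm p (HJ p Jp)) as [Hp [_ Hpf]].
  apply way_below_le, Hpf, (proj2 (models_point_at x (fst p) Hp)), Hx, Jp.
Qed.

Lemma good_family_psi m : good_family m -> psi_set (step_fun m).
Proof.
  intros Hm; exists m; split; [apply good_family_repr, Hm | intros q hq y Hy; apply (Hm q hq), Hy].
Qed.

Definition covered_by (m : list ((X -> Prop) * D)) (b : D) (x : X) : Prop :=
  exists q, In q m /\ fst q x /\ b << snd q.

Lemma covered_by_app m1 m2 b x : covered_by m1 b x \/ covered_by m2 b x -> covered_by (m1 ++ m2) b x.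
Proof. intros [[q [hq Hq]] | [q [hq Hq]]]; exists q; split; auto using in_or_app. Qed.

Lemma good_cover_entry O b : Om0 O -> (forall y, models y O -> b << f y) ->
  exists m, good_family m /\ forall x, O x -> covered_by m b x.
Proof.
  intros HO Hb.
  set (K := fun V => Om0 V /\ exists m, good_family m /\ forall x, V x -> covered_by m b x).
  assert (HK : is_ideal Om0 K).
  { split; [| split; [| split]].
    - intros V [HV _]; exact HV.
    - exists (fun _ => False); split; [exact Om0_False | exists []; split; [intros q [] | intros x []]].
    - intros V W [_ [m [Hm HVm]]] HW HWV.
      split; [exact HW | exists m; split; [exact Hm | intros x hx; apply HVm, HWV, hx]].
    - intros V W [HV [m1 [Hm1 HV1]]] [HW [m2 [Hm2 HW2]]]. exists (fun x => V x \/ W x).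
      split; [split; [apply Om0_or; assumption |] | split; intros x hx; auto].
      exists (m1 ++ m2); split; [apply good_family_app; assumption |].
      intros x [hx|hx]; apply covered_by_app; auto. }
  destruct (ideal_mem_of_points K O HK HO) as [_ Hm]; [| exact Hm].
  intros y HyO.
  destruct (way_below_interpolate b (f y) (Hb y HyO)) as [c [Dc [Hbc Hcf]]].
  destruct (way_below_nbhd c y Hcf) as [V [HV [HyV HVc]]].
  apply (point_of_models y K V HK); [| exact HyV].
  split; [exact HV | exists [(V, c)]; split].
  - intros q [E|[]]; subst; auto.
  - intros x hx; exists (V, c); split; [left; reflexivity | auto].
Qed.

Lemma good_cover l : basic_family l ->
  (forall p, In p l -> forall y, models y (fst p) -> snd p << f y) ->
  exists m, good_family m /\ forall p, In p l -> forall x, fst p x -> covered_by m (snd p) x.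
Proof.
  induction l as [| a l IH]; intros Hl Hw.
  - exists []; split; [intros q [] | intros p []].
  - destruct (basic_family_cons a l Hl) as [Ha Hl'].
    destruct (IH Hl') as [m1 [Hm1 Hcov1]]; [intros p hp; apply Hw; right; exact hp |].
    destruct (good_cover_entry (fst a) (snd a) Ha (Hw a (or_introl eq_refl))) as [m2 [Hm2 Hcov2]].
    exists (m1 ++ m2); split; [apply good_family_app; assumption |].
    intros p [E | hp] x hx; apply covered_by_app; [subst p; right | left]; auto.
Qed.

Lemma prec_step_fun m l g : good_family m -> repr l g ->
  (forall p, In p l -> forall x, fst p x -> covered_by m (snd p) x) -> prec Om0 le D0 g (step_fun m).
Proof.
  intros Hm Hg Hcov. exists l; split; [exact Hg |]. intros p hp x hx.
  destruct (Hcov p hp x hx) as [q [hq [hqx Hpq]]].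
  apply (way_below_mono (snd p) (snd p) (snd q)); [apply le_refl | exact Hpq |].
  apply (repr_ge m _ x q (good_family_repr m Hm) hq hqx).
Qed.

Lemma psi_set_down_closed h h' : psi_set h -> prec Om0 le D0 h' h -> psi_set h'.
Proof.
  intros [lh [Hh Hhf]] [l' [Hh' Hh'h]]. exists l'; split; [exact Hh' |]. intros p hp y Hyp.
  destruct (generic_point y (fst p) lh (repr_basic lh h Hh) (repr_basic l' h' Hh' p hp) Hyp)
    as [x0 [O' [_ [_ [HO'p [Hx0 [_ Hgen]]]]]]].
  apply (way_below_mono (snd p) (snd p) (h x0) (f y)); [apply le_refl | apply Hh'h; auto |].
  apply (repr_le lh); [exact Hh |]. intros q hq hqx; apply way_below_le, Hhf; auto.
Qed.

Lemma psi_set_directed g1 g2 : psi_set g1 -> psi_set g2 ->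
  exists h, psi_set h /\ prec Om0 le D0 g1 h /\ prec Om0 le D0 g2 h.
Proof.
  intros [l1 [Hg1 Hw1]] [l2 [Hg2 Hw2]].
  destruct (good_cover (l1 ++ l2)) as [m [Hm Hcov]].
  - intros p hp; destruct (in_app_or _ _ _ hp);
      [apply (repr_basic l1 g1) | apply (repr_basic l2 g2)]; auto.
  - intros p hp; destruct (in_app_or _ _ _ hp); auto.
  - exists (step_fun m); split; [apply good_family_psi, Hm | split].
    + apply (prec_step_fun m l1); [exact Hm | exact Hg1 | intros p hp; apply Hcov, in_or_app; auto].
    + apply (prec_step_fun m l2); [exact Hm | exact Hg2 | intros p hp; apply Hcov, in_or_app; auto].
Qed.

Lemma psi_set_rounded : rounded_ideal Om0 le D0 psi_set.
Proof.
  split; [| split; [| split]].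
  - intros h [l [Hh _]]; exists l; exact Hh.
  - exists (step_fun []); apply good_family_psi; intros q [].
  - intros h h' Hh _ Hh'h; exact (psi_set_down_closed h h' Hh Hh'h).
  - exact psi_set_directed.
Qed.

Lemma phi_psi : phi_fun psi_set = f.
Proof.
  apply functional_extensionality; intros y. apply le_antisym.
  - apply (proj2 (phi_fun_sup psi_set y psi_set_rounded)); intros d; apply approximant_le_f.
  - apply f_le_phi_psi, approximants_directed, psi_set_rounded.
Qed.
End FromContinuous.

Lemma psi_phi R : rounded_ideal Om0 le D0 R -> psi_set (phi_fun R) = R.
Proof.
  intros HR; apply predext; intros g; split; [apply mem_of_prec_hat, HR | apply prec_hat_phi, HR].
Qed.

Lemma phi_fun_le_iff R1 R2 : rounded_ideal Om0 le D0 R1 -> rounded_ideal Om0 le D0 R2 ->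
  subset R1 R2 <-> forall y, le (phi_fun R1 y) (phi_fun R2 y).
Proof.
  intros HR1 HR2; split.
  - intros H12 y. apply (proj2 (phi_fun_sup R1 y HR1)); intros d [h [Rh Hd]].
    apply (proj1 (phi_fun_sup R2 y HR2)); exists h; split; [apply H12, Rh | exact Hd].
  - intros Hle g Rg. apply (mem_of_prec_hat R2 g HR2).
    destruct (prec_hat_phi R1 g HR1 Rg) as [l [Hg Hw]]. exists l; split; [exact Hg |].
    intros p hp y Hy.
    apply (way_below_mono (snd p) (snd p) (phi_fun R1 y)); [apply le_refl | apply Hw; auto | apply Hle].
Qed.

Lemma rounded_ideals_iso_continuous :
  exists (phi : RIC Om0 le D0 -> ContFun Om0 le) (psi : ContFun Om0 le -> RIC Om0 le D0),
    (forall R, psi (phi R) = R) /\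
    (forall f, phi (psi f) = f) /\
    (forall R1 R2 : RIC Om0 le D0,
       subset (proj1_sig R1) (proj1_sig R2) <->
       (forall y, le (proj1_sig (phi R1) y) (proj1_sig (phi R2) y))).
Proof.
  exists (fun R => exist _ (phi_fun (proj1_sig R)) (phi_fun_cont _ (proj2_sig R))).
  exists (fun f => exist _ (psi_set (proj1_sig f)) (psi_set_rounded _ (proj2_sig f))).
  split; [| split].
  - intros [R HR]; apply subset_eq_compat, psi_phi, HR.
  - intros [f Hf]; apply subset_eq_compat, phi_psi, Hf.
  - intros [R1 HR1] [R2 HR2]; apply phi_fun_le_iff; assumption.
Qed.

End Isomorphism.

Theorem mainTheorem19 (X : Type) (opn : (X -> Prop) -> Prop)
  (Om0 : (X -> Prop) -> Prop) (D : Type) (le : D -> D -> Prop) (D0 : D -> Prop) :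
  is_topology opn -> viable_base opn Om0 ->
  bc_domain le -> is_basis le D0 ->
  exists (phi : RIC Om0 le D0 -> ContFun Om0 le)
         (psi : ContFun Om0 le -> RIC Om0 le D0),
    (forall R, psi (phi R) = R) /\
    (forall f, phi (psi f) = f) /\
    (forall R1 R2 : RIC Om0 le D0,
       subset (proj1_sig R1) (proj1_sig R2) <->
       (forall y, le (proj1_sig (phi R1) y) (proj1_sig (phi R2) y))).
Proof.
  intros _ [_ [Om0_False [Om0_True [Om0_or [Om0_and _]]]]]
    [le_refl [le_antisym [le_trans [[bot le_bot] [directed_sup [_ bounded_sup]]]]]] D0_basis.
  exact (rounded_ideals_iso_continuous X Om0 Om0_False Om0_True Om0_or Om0_and D le D0 bot
           le_refl le_antisym le_trans le_bot directed_sup bounded_sup D0_basis).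
Qed.
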